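(* Let $(\Omega,\mathcal{F})$ be a measurable space and $T:\Omega\to\Omega$ a measurable map. Let $\mathbb{V}(A)=\sup_{P\in\Theta}P(A)$, $A\in\mathcal{F}$, be an upper probability, where $\Theta=\{P \text{ probability on }(\Omega,\mathcal{F}) : P(A)\le \mathbb{V}(A)\ \forall A\in\mathcal{F}\}$. Assume $\mathbb{V}$ is continuous (from above), $T$-invariant, and $T$-ergodic. Let $\Theta_0$ be the set of $T$-invariant probabilities in $\Theta$. Let $P^*$ be a $T$-ergodic probability on $(\Omega,\mathcal{F})$. If there exists $P\in\Theta_0$ such that $P^*$ is absolutely continuous with respect to $P$, then $P^*\in\Theta_0$.
   Context: $\mathcal{I}=\{A\in\mathcal{F}: T^{-1}A=A\}$ is the $T$-invariant $\sigma$-algebra. $\mathbb{V}$ is continuous if $\mathbb{V}(A_n)\to 0$ whenever $A_n\in\mathcal{F}$, $A_n\downarrow\emptyset$. $\mathbb{V}$ is $T$-invariant if $\mathbb{V}(T^{-1}A)=\mathbb{V}(A)$ for all $A\in\mathcal{F}$. A continuous upper probability $\mathbb{V}$ is $T$-ergodic if $\mathbb{V}(A)\in\{0,1\}$ for every $A\in\mathcal{I}$. A probability $P$ is $T$-invariant if $P(T^{-1}A)=P(A)$ for all $A\in\mathcal{F}$, and $T$-ergodic if it is $T$-invariant and $P(A)\in\{0,1\}$ for all $A\in\mathcal{I}$. *)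

From HB Require Import structures.
From mathcomp Require Import all_boot all_order all_algebra.
From mathcomp Require Import all_classical all_reals all_analysis.
Set Implicit Arguments. Unset Strict Implicit. Unset Printing Implicit Defensive.
Import Order.TTheory GRing.Theory Num.Theory.
Local Open Scope classical_set_scope.
Local Open Scope ring_scope.
Local Open Scope ereal_scope.

Section upper_prob.
Context (d : measure_display) (Omega : measurableType d) (R : realType).

Definition invariant_set (T : Omega -> Omega) (A : set Omega) : Prop :=
  measurable A /\ T @^-1` A = A.

Definition core (V : set Omega -> \bar R) : set (probability Omega R) :=
  [set P : probability Omega R | forall A, measurable A -> P A <= V A].

Definition is_upper_probability (V : set Omega -> \bar R) : Prop :=
  forall A, measurable A -> V A = ereal_sup [set P A | P in core V].

Definition continuous_capacity (V : set Omega -> \bar R) : Prop :=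
  forall F : nat -> set Omega, (forall n, measurable (F n)) ->
    (forall n, F n.+1 `<=` F n) -> \bigcap_n F n = set0 ->
    (V \o F) @ \oo --> 0.

Definition V_invariant (T : Omega -> Omega) (V : set Omega -> \bar R) : Prop :=
  forall A, measurable A -> V (T @^-1` A) = V A.

Definition V_ergodic (T : Omega -> Omega) (V : set Omega -> \bar R) : Prop :=
  forall A, invariant_set T A -> V A = 0 \/ V A = 1.

Definition P_invariant (T : Omega -> Omega) (P : probability Omega R) : Prop :=
  forall A, measurable A -> P (T @^-1` A) = P A.

Definition P_ergodic (T : Omega -> Omega) (P : probability Omega R) : Prop :=
  P_invariant T P /\ forall A, invariant_set T A -> P A = 0 \/ P A = 1.

Definition invariant_core (T : Omega -> Omega) (V : set Omega -> \bar R)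
  : set (probability Omega R) :=
  [set P | core V P /\ P_invariant T P].

End upper_prob.

From HB Require Import structures.
From mathcomp Require Import all_boot all_order all_algebra.
From mathcomp Require Import all_classical all_reals all_analysis.
From mathcomp Require Import measurable_realfun.
From mathcomp Require Import ring lra.
Set Implicit Arguments. Unset Strict Implicit. Unset Printing Implicit Defensive.
Import Order.TTheory GRing.Theory Num.Theory.
Local Open Scope classical_set_scope.
Local Open Scope ring_scope.

(* Suppose V(A) = v < c = P*(A) and fix v < b < a < c.  Let B be the set of
   points x for which, for some M and every n, at least n a - M of the first n
   iterates of x lie in A; B is T-invariant.  A covering argument in the style
   of the maximal ergodic theorem, run under the invariant probability P*, gives
   P*(B) > 0, hence P(B) > 0 by absolute continuity and V(B) = 1 by ergodicity
   of V.  On the other hand, write B as the increasing union of the sets B_M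
   with M fixed.  For every Q <= V, Markov's inequality and the T-invariance
   of V give Q(B_M) <= v / b, hence V(B_M) <= v / b; subadditivity of V and
   continuity from above on B minus B_M carry this bound over to B, so
   V(B) <= v / b < 1. *)

Lemma sum_le_block_cover (R : realType) (a : R) (N : nat) (al be : nat -> R) :
  0 <= a -> (forall j, 0 <= al j <= 1) -> (forall j, 0 <= be j <= 1) ->
  (forall j, be j = 1 \/ exists2 n, (0 < n <= N)%N &
       \sum_(j <= i < j + n) al i < n%:R * a) ->
  forall L, \sum_(0 <= j < L) al j <= a * (L + N)%:R + N%:R + \sum_(0 <= j < L) be j.
Proof.
move=> a0 al01 be01 cover.
pose good j := \sum_(0 <= i < j) al i <= a * j%:R + \sum_(0 <= i < j) be i.
have be_ge0 j k : 0 <= \sum_(j <= i < k) be i.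
  by apply: sumr_ge0 => i _; case/andP: (be01 i).
have good_step j : good j -> exists2 j', (j < j' <= j + maxn N 1)%N & good j'.
  rewrite /good => gj; case: (cover j) => [bej|[n /andP[n0 nN] blockj]].
    exists j.+1; first by rewrite ltnSn -addn1 leq_add2l leq_maxr.
    rewrite !big_nat_recr //= bej -addn1 natrD mulrDr mulr1.
    by case/andP: (al01 j) => _ al1; lra.
  exists (j + n)%N; first by rewrite -{1}(addn0 j) ltn_add2l n0 leq_add2l leq_max nN.
  rewrite /good !(big_cat_nat (leq0n j) (leq_addr n j)) /= natrD mulrDr.
  by have := be_ge0 j (j + n)%N; lra.
have good_near L : exists2 j, (L <= j <= L + N)%N & good j.
  elim: L => [|L [j /andP[Lj jLN] gj]].
    by exists 0%N => //; rewrite /good !big_geq // mulr0 addr0.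
  case: (ltnP L j) => [Lj'|jL].
    by exists j => //; rewrite Lj' addSn (leq_trans jLN).
  have eqjL : j = L by apply/eqP; rewrite eqn_leq jL Lj.
  rewrite {}eqjL in gj.
  case: (good_step L gj) => j' /andP[Lj' j'le] gj'; exists j' => //.
  by rewrite Lj' (leq_trans j'le) // addSn -addnS leq_add2l geq_max ltnS leqnSn.
move=> L; case: (good_near L) => j /andP[Lj jLN]; rewrite /good.
rewrite !(big_cat_nat (leq0n L) Lj) /=.
have al_ge0 : 0 <= \sum_(L <= i < j) al i.
  by apply: sumr_ge0 => i _; case/andP: (al01 i).
have be_le : \sum_(L <= i < j) be i <= N%:R.
  apply: (le_trans (y := \sum_(L <= i < j) (1 : R))).
    by apply: ler_sum => i _; case/andP: (be01 i).
  by rewrite sumr_const_nat ler_nat leq_subLR.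
have aj : a * j%:R <= a * (L + N)%:R by rewrite ler_wpM2l // ler_nat.
by have := be_ge0 L j; lra.
Qed.

Lemma indic_ge0_le1 (T : Type) (R : realType) (A : set T) (x : T) :
  0 <= (\1_A x : R) <= 1.
Proof. by rewrite indicE; case: (x \in A); rewrite ?lexx ?ler01. Qed.

Section upper_probability.
Context d (Omega : measurableType d) (R : realType) (V : set Omega -> \bar R).
Hypothesis V_sup : is_upper_probability V.
Local Open Scope ereal_scope.

Lemma upper_probability_le X r :
  measurable X -> (forall Q, core V Q -> Q X <= r) -> V X <= r.
Proof.
by move=> mX QX; rewrite V_sup //; apply: ub_ereal_sup => _ [Q QV <-]; exact: QX.
Qed.

Lemma upper_probability_subadditive X Y :
  measurable X -> measurable Y -> V (X `|` Y) <= V X + V Y.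
Proof.
move=> mX mY; apply: upper_probability_le => [|Q QV]; first exact: measurableU.
by apply: le_trans (measureU2 Q mX mY) _; apply: leeD; exact: QV.
Qed.

Lemma upper_probability_bounds (P : probability Omega R) X :
  core V P -> measurable X -> 0 <= V X <= 1.
Proof.
move=> PV mX; rewrite (le_trans (measure_ge0 P X) (PV X mX)) /=.
by apply: upper_probability_le => // Q _; exact: probability_le1.
Qed.

Hypothesis V_cont : continuous_capacity V.

Lemma upper_probability_bigcup_le (D : nat -> set Omega) (r : R) :
  (forall M, measurable (D M)) -> (forall M, D M `<=` D M.+1) ->
  (forall M, V (D M) <= r%:E) -> V (\bigcup_M D M) <= r%:E.
Proof.
move=> mD DS VD; set B := \bigcup_M D M.
have mB : measurable B by exact: bigcupT_measurable.
have cvg0 : V \o (fun M => B `\` D M) @ \oo --> 0.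
  apply: V_cont.
  - by move=> M; exact: measurableD.
  - by move=> M x [Bx nDx]; split => // DMx; apply: nDx; exact: DS.
  apply/seteqP; split => // x h.
  by have [M _ DMx] := (h 0%N I).1; exact: (h M I).2 DMx.
apply/lee_addgt0Pr => e e0.
have e0' : 0 < e%:E by rewrite lte_fin.
have [M _ small] := cvg0 _ (open_ereal_lt' e0').
have DMB : D M `<=` B by move=> x DMx; exists M.
rewrite -(setDUK DMB).
apply: le_trans (upper_probability_subadditive (mD M) (measurableD mB (mD M))) _.
by apply: leeD => //; exact: ltW (small M (leqnn M)).
Qed.

End upper_probability.

Lemma V_ergodic_eq1 d (Omega : measurableType d) (R : realType)
    (T : Omega -> Omega) (V nu : set Omega -> \bar R) (P : probability Omega R) B :
  V_ergodic T V -> core V P -> nu `<< P -> invariant_set T B -> (0 < nu B)%E ->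
  V B = 1%E.
Proof.
move=> V_erg PV nu_ll_P B_inv nuB; have [VB0|//] := V_erg B B_inv.
have PB0 : P B = 0%E.
  by apply/eqP; rewrite eq_le measure_ge0 andbT -VB0 PV //; exact: B_inv.1.
by move: nuB; rewrite ((null_content_dominatesP _ _).1 nu_ll_P B B_inv.1 PB0) ltxx.
Qed.

Section orbit.
Context d (Omega : measurableType d) (R : realType) (T : Omega -> Omega).
Hypothesis mT : measurable_fun setT T.

Lemma measurable_preimage_iter k A :
  measurable A -> measurable (iter k T @^-1` A).
Proof.
elim: k A => [//|k IH] A mA.
have mTA : measurable (T @^-1` A) by rewrite -[T @^-1` A]setTI; exact: mT.
exact: IH mTA.
Qed.

Lemma invariant_preimage_iter (mu : set Omega -> \bar R) :
  V_invariant T mu -> forall k A, measurable A -> mu (iter k T @^-1` A) = mu A.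
Proof.
move=> mu_inv; elim=> [//|k IH] A mA.
rewrite -(mu_inv A mA) -(IH (T @^-1` A)) //.
exact: (measurable_preimage_iter 1 mA).
Qed.

Definition visits (A : set Omega) (n : nat) (x : Omega) : R :=
  \sum_(0 <= k < n) \1_A (iter k T x).

Lemma visits0 A x : visits A 0 x = 0.
Proof. by rewrite /visits big_geq. Qed.

Lemma visitsS A n x : visits A n.+1 x = \1_A x + visits A n (T x).
Proof.
rewrite /visits big_nat_recl //; congr (_ + _).
by apply: eq_bigr => k _; rewrite iterSr.
Qed.

Lemma visits_shift A j n x :
  \sum_(j <= i < j + n) \1_A (iter i T x) = visits A n (iter j T x).
Proof.
rewrite -{1}[j]add0n big_addn addKn /visits.
by apply: eq_bigr => i _; rewrite iterD.
Qed.

Lemma visits_ge0 A n x : 0 <= visits A n x.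
Proof. by apply: sumr_ge0 => k _; case/andP: (indic_ge0_le1 R A (iter k T x)). Qed.

Lemma measurable_indic_iter A k :
  measurable A -> measurable_fun setT (fun x => \1_A (iter k T x) : R).
Proof.
by move=> mA; exact: measurable_indic (measurable_preimage_iter k mA).
Qed.

Lemma measurable_visits A n : measurable A -> measurable_fun setT (visits A n).
Proof.
by move=> mA; apply: measurable_sum => k; exact: measurable_indic_iter.
Qed.

Lemma measurable_visits_ge A n r :
  measurable A -> measurable [set x | r <= visits A n x].
Proof.
move=> mA; have := measurable_fun_ler (measurable_cst r) (measurable_visits n mA).
by move=> /(_ measurableT [set true] I); rewrite setTI.
Qed.

Lemma measurable_visits_lt A n r :
  measurable A -> measurable [set x | visits A n x < r].
Proof.
move=> mA; have := measurable_fun_ltr (measurable_visits n mA) (measurable_cst r).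
by move=> /(_ measurableT [set true] I); rewrite setTI.
Qed.

Lemma integral_visits (mu : {measure set Omega -> \bar R}) A n :
  measurable A ->
  (\int[mu]_x (visits A n x)%:E = \sum_(0 <= k < n) mu (iter k T @^-1` A))%E.
Proof.
move=> mA; under eq_integral do rewrite /visits -sumEFin.
rewrite ge0_integral_sum //; last first.
  by move=> k; apply/measurable_EFinP; exact: measurable_indic_iter.
apply: eq_bigr => k _.
by rewrite integral_indic ?setIT //; exact: measurable_preimage_iter.
Qed.

Definition rate_bounded_below (A : set Omega) (a : R) (M : nat) :=
  [set x | forall n, n%:R * a - M%:R <= visits A n x].

Definition rate_at_least (A : set Omega) (a : R) :=
  \bigcup_M rate_bounded_below A a M.

Lemma measurable_rate_bounded_below A a M :
  measurable A -> measurable (rate_bounded_below A a M).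
Proof.
move=> mA; rewrite [X in measurable X](_ : _ =
    \bigcap_n [set x | n%:R * a - M%:R <= visits A n x]); last first.
  by apply/seteqP; split => x /= h n => [_|]; exact: h.
by apply: bigcapT_measurable => n; exact: measurable_visits_ge.
Qed.

Lemma rate_bounded_below_subS A a M :
  rate_bounded_below A a M `<=` rate_bounded_below A a M.+1.
Proof.
move=> x h n; apply: le_trans (h n).
by rewrite lerD2l lerN2 ler_nat.
Qed.

Lemma measurable_rate_at_least A a :
  measurable A -> measurable (rate_at_least A a).
Proof.
by move=> mA; apply: bigcupT_measurable => M; exact: measurable_rate_bounded_below.
Qed.

Lemma invariant_rate_at_least A a :
  measurable A -> 0 <= a <= 1 -> invariant_set T (rate_at_least A a).
Proof.
move=> mA /andP[a0 a1]; split; first exact: measurable_rate_at_least.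
apply/seteqP; split => x [M _ h]; exists M.+1 => // n.
- case: n => [|n]; first by rewrite visits0 mul0r sub0r oppr_le0.
  rewrite visitsS; have := h n; case/andP: (indic_ge0_le1 R A x) => i0 i1.
  rewrite -addn1 -(addn1 M) !natrD mulrDl mul1r; lra.
- have := h n.+1; rewrite visitsS; case/andP: (indic_ge0_le1 R A x) => i0 i1.
  rewrite -addn1 -(addn1 M) !natrD mulrDl mul1r; lra.
Qed.

Lemma visits_markov (mu : {measure set Omega -> \bar R}) A n (r : R) :
  measurable A -> 0 <= r ->
  (r%:E * mu [set x | (r <= visits A n x)%R] <=
   \sum_(0 <= k < n) mu (iter k T @^-1` A))%E.
Proof.
move=> mA r0; set E := [set x | _]; have mE : measurable E by exact: measurable_visits_ge.
rewrite -integral_visits // -[E]setIT -integral_indic //.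
rewrite -ge0_integralZl_EFin //; last first.
  by apply/measurable_EFinP; exact: measurable_indic.
apply: ge0_le_integral => //.
- by move=> x _; rewrite -EFinM lee_fin mulr_ge0 // indicE ler0n.
- by apply/measurable_EFinP; apply: measurable_funM => //; exact: measurable_indic.
- by apply/measurable_EFinP; exact: measurable_visits.
move=> x _; rewrite -EFinM lee_fin indicE.
by case: (boolP (x \in E)) => [/set_mem|_]; rewrite ?mulr1 ?mulr0 ?visits_ge0.
Qed.

Lemma rate_bounded_below_le (Q : {measure set Omega -> \bar R}) A a b v M :
  measurable A -> 0 < b < a -> (forall k, (Q (iter k T @^-1` A) <= v%:E)%E) ->
  (Q (rate_bounded_below A a M) <= (v / b)%:E)%E.
Proof.
move=> mA /andP[b0 ba] Qle.
(* n is large enough for the deficit M to be absorbed: n a - M >= n b. *)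
set n := (Num.truncn (M%:R / (a - b))).+1.
have Mn : M%:R < n%:R * (a - b) by rewrite -ltr_pdivrMr ?subr_gt0 // truncnS_gt.
have n0 : 0 < n%:R :> R by rewrite ltr0n.
set E := [set x | n%:R * b <= visits A n x].
have DE : rate_bounded_below A a M `<=` E.
  by move=> x /(_ n); rewrite /E /=; rewrite mulrBr in Mn; lra.
apply: (le_trans (le_measure _ _ _ DE)); rewrite ?inE.
- exact: measurable_rate_bounded_below.
- exact: measurable_visits_ge.
have markov := visits_markov Q n mA (mulr_ge0 (ltW n0) (ltW b0)).
have sum_le : (\sum_(0 <= k < n) Q (iter k T @^-1` A) <= (n%:R * v)%:E)%E.
  rewrite mulr_natl -[X in v *+ X]subn0 -sumr_const_nat -sumEFin.
  by apply: lee_sum => k _; exact: Qle.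
rewrite (_ : v / b = (n%:R * b)^-1 * (n%:R * v)); last first.
  by rewrite invfM mulrACA mulVf ?gt_eqF // mul1r mulrC.
by rewrite EFinM lee_pdivlMl ?mulr_gt0 //; exact: le_trans markov sum_le.
Qed.

Definition early_deficit (A : set Omega) (a : R) (N : nat) :=
  [set x | exists2 n, (0 < n <= N)%N & visits A n x < n%:R * a].

Lemma measurable_early_deficit A a N :
  measurable A -> measurable (early_deficit A a N).
Proof.
move=> mA; rewrite [X in measurable X](_ : _ =
    \bigcup_(n in [set n | (0 < n <= N)%N]) [set x | visits A n x < n%:R * a]).
  by apply: bigcup_measurable => n _; exact: measurable_visits_lt.
by apply/seteqP; split => x [n nN hn]; exists n.
Qed.

Lemma early_deficit_nondecreasing A a : nondecreasing_seq (early_deficit A a).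
Proof.
move=> N N' NN'; apply/subsetPset => x [n /andP[n0 nN] hn]; exists n => //.
by rewrite n0 (leq_trans nN NN').
Qed.

Lemma not_rate_at_least_sub A a :
  ~` rate_at_least A a `<=` \bigcup_N early_deficit A a N.
Proof.
move=> x notB; have /existsNP[n] : ~ rate_bounded_below A a 0 x.
  by move=> h; apply: notB; exists 0%N.
rewrite subr0 => /negP; rewrite -ltNge => hn; exists n => //; exists n => //.
rewrite leqnn andbT lt0n; apply: contraTneq hn => ->.
by rewrite visits0 mul0r ltxx.
Qed.

Lemma visits_le_early_deficit A a N L x : 0 <= a ->
  visits A L x <= a * (L + N)%:R + N%:R + visits (~` early_deficit A a N) L x.
Proof.
move=> a0; apply: (sum_le_block_cover (al := fun j => \1_A (iter j T x))
  (be := fun j => \1_(~` early_deficit A a N) (iter j T x))) => // j.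
- exact: indic_ge0_le1.
- exact: indic_ge0_le1.
have [[n nN hn]|notG] := pselect (early_deficit A a N (iter j T x)).
  by right; exists n; rewrite // visits_shift.
by left; rewrite indicE mem_set.
Qed.

Lemma sum_preimage_iter_le (mu : probability Omega R) A A' L K :
  measurable A -> measurable A' -> 0 <= K ->
  (forall x, visits A L x <= visits A' L x + K) ->
  (\sum_(0 <= k < L) mu (iter k T @^-1` A) <=
   \sum_(0 <= k < L) mu (iter k T @^-1` A') + K%:E)%E.
Proof.
move=> mA mA' K0 le_visits.
rewrite -!integral_visits // -[K%:E]mule1 -(probability_setT mu) -integral_cst //.
rewrite -ge0_integralD //; last 2 first.
- by move=> x _; rewrite lee_fin visits_ge0.
- by apply/measurable_EFinP; exact: measurable_visits.
apply: ge0_le_integral => //.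
- by move=> x _; rewrite lee_fin visits_ge0.
- by apply/measurable_EFinP; exact: measurable_visits.
- by apply: emeasurable_funD; [apply/measurable_EFinP; exact: measurable_visits|].
by move=> x _; rewrite /= -EFinD lee_fin.
Qed.

Lemma early_deficit_cvg1 (mu : probability Omega R) A a :
  measurable A -> mu (rate_at_least A a) = 0%E ->
  (mu \o early_deficit A a @ \oo --> 1)%E.
Proof.
move=> mA muB0; have mG N := measurable_early_deficit a N mA.
have mUG : measurable (\bigcup_N early_deficit A a N) by exact: bigcupT_measurable.
suff <- : mu (\bigcup_N early_deficit A a N) = 1%E.
  exact: nondecreasing_cvg_mu mG mUG (early_deficit_nondecreasing A a).
apply/eqP; rewrite eq_le probability_le1 //=.
have mB := measurable_rate_at_least a mA.
have <- : mu (~` rate_at_least A a) = 1%E by rewrite probability_setC // muB0 sube0.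
by apply: le_measure; rewrite ?inE //; [exact: measurableC|exact: not_rate_at_least_sub].
Qed.

Lemma early_deficit_cover_le (mu : probability Omega R) A a N L :
  P_invariant T mu -> measurable A -> 0 <= a ->
  L%:R * fine (mu A) <=
  L%:R * fine (mu (~` early_deficit A a N)) + (a * (L + N)%:R + N%:R).
Proof.
move=> mu_inv mA a0; set G := ~` early_deficit A a N.
have mG : measurable G by exact/measurableC/measurable_early_deficit.
have K0 : 0 <= a * (L + N)%:R + N%:R by rewrite addr_ge0 ?mulr_ge0.
have cover x : visits A L x <= visits G L x + (a * (L + N)%:R + N%:R).
  by rewrite addrC; exact: visits_le_early_deficit.
have mu_iter X k : measurable X -> mu (iter k T @^-1` X) = (fine (mu X))%:E.
  move=> mX; rewrite (invariant_preimage_iter (mu := mu) mu_inv k mX).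
  by rewrite fineK // fin_num_measure.
have := sum_preimage_iter_le mu mA mG K0 cover.
under eq_bigr do rewrite mu_iter //.
under [X in (_ <= X + _)%E]eq_bigr do rewrite mu_iter //.
rewrite !sumEFin !sumr_const_nat subn0 -EFinD lee_fin.
by rewrite -[_ *+ L]mulr_natl -[(fine (mu G)) *+ L]mulr_natl.
Qed.

Lemma rate_at_least_gt0 (mu : probability Omega R) A a :
  P_invariant T mu -> measurable A -> 0 <= a -> (a%:E < mu A)%E ->
  (0 < mu (rate_at_least A a))%E.
Proof.
move=> mu_inv mA a0 a_lt; rewrite lt0e measure_ge0 andbT; apply/eqP => muB0.
have ec : mu A = (fine (mu A))%:E by rewrite fineK // fin_num_measure.
set c := fine (mu A) in ec; rewrite ec lte_fin in a_lt.
have c1 : c <= 1 by rewrite -lee_fin -ec probability_le1.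
set eps := c - a; have eps0 : 0 < eps by rewrite subr_gt0.
have [N GN] : exists N, ((1 - eps / 2)%:E < mu (early_deficit A a N))%E.
  have lt1 : ((1 - eps / 2)%:E < 1%:E)%E by rewrite lte_fin; lra.
  have [N _ HN] := early_deficit_cvg1 mA muB0 (open_ereal_gt' lt1).
  by exists N; exact: HN N (leqnn N).
have mG := measurable_early_deficit a N mA.
have eCG : fine (mu (~` early_deficit A a N)) = 1 - fine (mu (early_deficit A a N)).
  by rewrite probability_setC // fineB // fin_num_measure.
rewrite -[mu (early_deficit _ _ _)]fineK ?fin_num_measure // lte_fin in GN.
(* L is large enough for the boundary terms, at most 2 N, to stay below L eps / 2. *)
set L := (Num.truncn (4 * N%:R / eps)).+1.
have hL : 4 * N%:R < L%:R * eps by rewrite -ltr_pdivrMr // truncnS_gt.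
have := early_deficit_cover_le N L mu_inv mA a0; rewrite eCG natrD -/c.
set g := fine _ in GN *.
have h1 : L%:R * (1 - g) <= L%:R * (eps / 2) by rewrite ler_wpM2l //; lra.
have h2 : a * N%:R <= N%:R by rewrite ler_piMl //; lra.
rewrite /eps in hL h1; lra.
Qed.

Lemma upper_probability_rate_at_least_le (V : set Omega -> \bar R) A a b v :
  is_upper_probability V -> continuous_capacity V -> V_invariant T V ->
  measurable A -> V A = v%:E -> 0 < b < a ->
  (V (rate_at_least A a) <= (v / b)%:E)%E.
Proof.
move=> V_sup V_cont V_inv mA VA ba.
apply: (upper_probability_bigcup_le V_sup V_cont) => M.
- exact: measurable_rate_bounded_below.
- exact: rate_bounded_below_subS.
apply: (upper_probability_le V_sup) => [|Q QV].
  exact: measurable_rate_bounded_below.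
apply: rate_bounded_below_le => // k.
by rewrite -VA -(invariant_preimage_iter V_inv k mA); exact/QV/measurable_preimage_iter.
Qed.

End orbit.

Theorem lemma3p2 (d : measure_display) (Omega : measurableType d) (R : realType)
  (T : Omega -> Omega) (V : set Omega -> \bar R) (Pstar : probability Omega R) :
  measurable_fun setT T ->
  is_upper_probability V ->
  continuous_capacity V ->
  V_invariant T V ->
  V_ergodic T V ->
  P_ergodic T Pstar ->
  (exists P : probability Omega R,
      invariant_core T V P /\ (Pstar : set Omega -> \bar R) `<< P) ->
  invariant_core T V Pstar.
Proof.
move=> mT V_sup V_cont V_inv V_erg Pstar_erg [P [[PV _] Pstar_ll_P]].
split=> [A mA|]; last exact: Pstar_erg.1.
rewrite leNgt; apply/negP => VA_lt.
have /andP[VA_ge0 VA_le1] := upper_probability_bounds V_sup PV mA.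
have eV : V A = (fine (V A))%:E.
  by rewrite fineK // ge0_fin_numE // (le_lt_trans VA_le1) ?ltry.
have eP : Pstar A = (fine (Pstar A))%:E by rewrite fineK // fin_num_measure.
set v := fine (V A) in eV; set c := fine (Pstar A) in eP.
have v0 : 0 <= v by rewrite -lee_fin -eV.
have vc : v < c by rewrite -lte_fin -eV -eP.
have c1 : c <= 1 by rewrite -lee_fin -eP probability_le1.
set b := (2 * v + c) / 3; set a := (v + 2 * c) / 3.
have B_inv : invariant_set T (rate_at_least T A a).
  by apply: invariant_rate_at_least; rewrite // /a; apply/andP; split; lra.
have PstarB : (0 < Pstar (rate_at_least T A a))%E.
  by apply: (rate_at_least_gt0 mT Pstar_erg.1); rewrite // ?eP ?lte_fin /a; lra.
have VB1 := V_ergodic_eq1 V_erg PV Pstar_ll_P B_inv PstarB.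
have ba : 0 < b < a by rewrite /a /b; apply/andP; split; lra.
have := upper_probability_rate_at_least_le mT V_sup V_cont V_inv mA eV ba.
by rewrite VB1 lee_fin ler_pdivlMr /b; lra.
Qed.
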